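(* Let $\psi\in\mathbf{\Psi}_n$. Define $|\!|\!|\cdot|\!|\!|_\psi:X^n\to\mathbb{R}$ by $$|\!|\!|x|\!|\!|_\psi:=\Big(\sum_{i=1}^n\|x_i\|\Big)\,\psi\Big(\frac{\|x_1\|}{\sum_{i=1}^n\|x_i\|},\ldots,\frac{\|x_{n}\|}{\sum_{i=1}^n\|x_i\|}\Big)\ \text{if } x\ne0_{X^n},\qquad |\!|\!|0_{X^n}|\!|\!|_\psi:=0,$$ for all $x:=(x_1,\ldots,x_n)\in X^n$. Then: (i) $|\!|\!|\cdot|\!|\!|_\psi \in\mathbf{N}_{X^n}$; (ii) if $\psi\in \mathbf{\Psi}^{\rm sc}_{n}$ and $\|\cdot\|$ is strictly convex, then $|\!|\!|\cdot|\!|\!|_\psi\in \mathbf{N}^{\rm sc}_{X^n}$; (iii) $\psi(s)=|\!|\!|(s_1\mathbf{u}_1,\ldots,s_{n}\mathbf{u}_n)|\!|\!|_{\psi}$ for all $(\mathbf{u}_1,\ldots,\mathbf{u}_n)\in \mathbb{S}_X\times\ldots\times\mathbb{S}_X$ and $s:=(s_1,\ldots,s_{n})\in\Omega_n$.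
   Context: Let $(X,\|\cdot\|)$ be a normed vector space, $n\ge2$, $\mathbb{S}_X$ its unit sphere. $\mathbf{N}_{X^n}$ is the family of norms $|\!|\!|\cdot|\!|\!|$ on $X^n$ satisfying (A1) $|\!|\!|(x_1,\ldots,x_n)|\!|\!|=|\!|\!|(\pm x_1,\ldots,\pm x_n)|\!|\!|$ for all $x\in X^n$ and all sign choices, and (A2) $|\!|\!|(0_X,\ldots,0_X,v,0_X,\ldots,0_X)|\!|\!|=\|v\|$ for all $v\in X$ in any $i$th position. $\mathbf{N}^{\rm sc}_{X^n}$ is its subclass of strictly convex norms. $\Omega_n:=\{t\in\mathbb{R}^n\mid t_i\ge0,\ \sum_i t_i=1\}$, $\Omega_n^\circ:=\{t\in\Omega_n\mid t_i<1\ \forall i\}$. $\mathbf{\Psi}_n$ is the class of convex continuous $\psi:\Omega_n\to\mathbb{R}$ with (B1) $\psi(\mathbf{e}_i)=1$ for all standard unit vectors $\mathbf{e}_i$ and (B2) $\psi(t)\ge(1-t_i)\psi\big(\frac{t_1}{1-t_i},\ldots,\frac{t_{i-1}}{1-t_i},0,\frac{t_{i+1}}{1-t_i},\ldots,\frac{t_n}{1-t_i}\big)$ for all $t\in\Omega_n^\circ$, $i=1,\ldots,n$; $\mathbf{\Psi}^{\rm sc}_n$ is its subclass of strictly convex functions. *)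

From HB Require Import structures.
From mathcomp Require Import all_boot all_order all_algebra.
From mathcomp Require Import all_classical all_reals all_analysis.
Set Implicit Arguments. Unset Strict Implicit. Unset Printing Implicit Defensive.
Import Order.TTheory GRing.Theory Num.Theory.
Import numFieldNormedType.Exports.
Local Open Scope classical_set_scope.
Local Open Scope ring_scope.

Section Defs.
Variables (R : realType) (X : normedModType R) (n : nat).

(* X^n is represented as functions 'I_n -> X with pointwise operations. *)
Definition vadd (x y : 'I_n -> X) : 'I_n -> X := fun i => x i + y i.
Definition vscale (a : R) (x : 'I_n -> X) : 'I_n -> X := fun i => a *: x i.
Definition vzero : 'I_n -> X := fun _ => 0.

Definition is_norm (N : ('I_n -> X) -> R) : Prop :=
  [/\ forall x, 0 <= N x,
      forall x, N x = 0 -> x = vzero,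
      forall a x, N (vscale a x) = `|a| * N x
    & forall x y, N (vadd x y) <= N x + N y].

Definition in_N (N : ('I_n -> X) -> R) : Prop :=
  [/\ is_norm N,
      (forall (x : 'I_n -> X) (eps : 'I_n -> bool),
          N (fun i => (-1) ^+ eps i *: x i) = N x)
    &
      (forall (i : 'I_n) (v : X), N (fun j => if j == i then v else 0) = `|v|)].

(* strict convexity of a norm: the unit sphere contains no nontrivial segment
   (midpoint formulation) *)
Definition strictly_convex_normX : Prop :=
  forall x y : X, `|x| = 1 -> `|y| = 1 -> x <> y -> `|(2^-1 : R) *: (x + y)| < 1.

Definition strictly_convex_norm (N : ('I_n -> X) -> R) : Prop :=
  forall x y, N x = 1 -> N y = 1 -> x <> y -> N (vscale 2^-1 (vadd x y)) < 1.

Definition in_N_sc (N : ('I_n -> X) -> R) : Prop := in_N N /\ strictly_convex_norm N.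

End Defs.

Section Psi.
Variables (R : realType) (n : nat).

Definition Omega : set 'rV[R]_n :=
  [set t | (forall i, 0 <= t ord0 i) /\ \sum_(i < n) t ord0 i = 1].
Definition Omega_int : set 'rV[R]_n :=
  [set t | Omega t /\ forall i, t ord0 i < 1].

Definition std_e (i : 'I_n) : 'rV[R]_n := \row_j (if j == i then 1 else 0).

Definition in_Psi (psi : 'rV[R]_n -> R) : Prop :=
  [/\
      (forall s t (l : R), Omega s -> Omega t -> 0 <= l <= 1 ->
          psi (l *: s + (1 - l) *: t) <= l * psi s + (1 - l) * psi t),
      {within Omega, continuous psi},
      (forall i, psi (std_e i) = 1)
    &
      (forall t i, Omega_int t ->
         psi t >= (1 - t ord0 i) *
           psi (\row_j (if j == i then 0 else t ord0 j / (1 - t ord0 i))))].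

Definition in_Psi_sc (psi : 'rV[R]_n -> R) : Prop :=
  in_Psi psi /\
  (forall s t (l : R), Omega s -> Omega t -> s <> t -> 0 < l < 1 ->
      psi (l *: s + (1 - l) *: t) < l * psi s + (1 - l) * psi t).

End Psi.

Definition norm_psi (R : realType) (X : normedModType R) (n : nat)
  (psi : 'rV[R]_n -> R) (x : 'I_n -> X) : R :=
  if `[< x = @vzero R X n >] then 0
  else (\sum_(i < n) `|x i|) *
       psi (\row_j (`|x j| / \sum_(i < n) `|x i|)).

From HB Require Import structures.
From mathcomp Require Import all_boot all_order all_algebra.
From mathcomp Require Import all_classical all_reals all_analysis.
From mathcomp Require Import ring.
Import Order.TTheory GRing.Theory Num.Theory.
Import numFieldNormedType.Exports.
Local Open Scope classical_set_scope.
Local Open Scope ring_scope.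

(** The norm is [|||x|||_psi = F (`|x_1|, ..., `|x_n|)], where [F] is the
  positively homogeneous extension of [psi] to the nonnegative orthant of
  [R^n].  Convexity of [psi] makes [F] subadditive; convexity together with
  (B2) makes [F] monotone, one coordinate at a time, since lowering the [i]-th
  coordinate is a convex combination of the vector itself and of the vector
  with its [i]-th coordinate set to [0]; (B1) makes [F] equal to [c] on
  [c e_i].  Together with the triangle inequality in [X] this gives a norm
  satisfying (A1) and (A2).  Strict convexity of [psi] turns these into strict
  subadditivity (for non-proportional vectors) and strict monotonicity, and
  on two proportional unit vectors of [X^n] the strict convexity of [X] is
  applied to a coordinate where they differ. *)

Set Implicit Arguments. Unset Strict Implicit.

Lemma normD_lt (R : realType) (X : normedModType R) (u v : X) :
  strictly_convex_normX X -> `|u| = `|v| -> u <> v -> `|u + v| < `|u| + `|v|.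
Proof.
move=> Xsc uv u_neq_v; rewrite -uv.
have [u0|u_neq0] := eqVneq `|u| 0.
  by case: u_neq_v; rewrite (normr0_eq0 u0) (normr0_eq0 (etrans (esym uv) u0)).
have u_pos : 0 < `|u| by rewrite lt_def u_neq0 normr_ge0.
have unit_u : Num.norm (`|u|^-1 *: u) = 1 by rewrite normrZ normfV normr_id mulVf.
have unit_v : Num.norm (`|u|^-1 *: v) = 1 by rewrite normrZ normfV normr_id -uv mulVf.
have neq : `|u|^-1 *: u <> `|u|^-1 *: v by move/(scalerI (invr_neq0 u_neq0)).
have := Xsc _ _ unit_u unit_v neq.
rewrite -scalerDr scalerA normrZ normrM !normfV normr_id [`|2|]ger0_norm //.
have -> : 2^-1 * `|u|^-1 * `|u + v| = `|u + v| / (`|u| + `|u|).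
  by field; rewrite u_neq0 andbT gt_eqF ?addr_gt0.
by rewrite ltr_pdivrMr ?addr_gt0 // mul1r.
Qed.

Section PsiNorm.
Variables (R : realType) (X : normedModType R) (n : nat) (psi : 'rV[R]_n -> R).

Implicit Types (a p q : 'I_n -> R) (c l : R) (i j : 'I_n).

Definition mass a : R := \sum_(i < n) a i.
Definition direction a : 'rV[R]_n := \row_j (a j / mass a).
Definition psi_hom a : R :=
  if 0 < mass a then mass a * psi (direction a) else 0.
Definition nonneg a : Prop := forall i, 0 <= a i.
Definition set_coord q i c : 'I_n -> R := fun j => if j == i then c else q j.

Lemma mass_ge0 a : nonneg a -> 0 <= mass a.
Proof. by move=> a0; apply: sumr_ge0. Qed.

Lemma mass_le0 a : nonneg a -> mass a <= 0 -> forall i, a i = 0.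
Proof.
move=> a0 le0 i; apply: (@psumr_eq0P _ _ predT _ (fun i _ => a0 i)) => //.
by apply/eqP; rewrite eq_le le0 mass_ge0.
Qed.

Lemma massD p q : mass (fun j => p j + q j) = mass p + mass q.
Proof. exact: big_split. Qed.

Lemma massZ c p : mass (fun j => c * p j) = c * mass p.
Proof. by rewrite /mass mulr_sumr. Qed.

Lemma directionZ c p : 0 < c -> direction (fun j => c * p j) = direction p.
Proof.
move=> c0; apply/rowP => j; rewrite !mxE massZ invfM mulrACA mulfV ?mul1r //.
by rewrite gt_eqF.
Qed.

Lemma direction_Omega a : nonneg a -> 0 < mass a -> Omega (direction a).
Proof.
move=> a0 pos; split=> [i|]; first by rewrite mxE divr_ge0 // ltW.
under eq_bigr do rewrite mxE.
by rewrite -mulr_suml mulfV // gt_eqF.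
Qed.

Lemma psi_hom0 a : mass a <= 0 -> psi_hom a = 0.
Proof. by rewrite /psi_hom leNgt => /negbTE ->. Qed.

Lemma psi_homE a : 0 < mass a -> psi_hom a = mass a * psi (direction a).
Proof. by rewrite /psi_hom => ->. Qed.

Lemma psi_homZ c p : 0 <= c -> psi_hom (fun j => c * p j) = c * psi_hom p.
Proof.
rewrite le_eqVlt => /predU1P [<-|c0].
  by rewrite mul0r psi_hom0 // massZ mul0r.
rewrite /psi_hom massZ directionZ // pmulr_rgt0 //.
by case: ifP; rewrite ?mulr0 ?mulrA.
Qed.

Lemma psi_hom_addE p q : 0 < mass p -> 0 < mass q ->
  let l := mass p / (mass p + mass q) in
  psi_hom (fun j => p j + q j) =
    (mass p + mass q) * psi (l *: direction p + (1 - l) *: direction q).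
Proof.
move=> p0 q0 l; have pq0 : 0 < mass p + mass q by rewrite addr_gt0.
rewrite psi_homE massD //; congr (_ * psi _); apply/rowP => j.
rewrite !mxE massD /l.
by field; rewrite !gt_eqF.
Qed.

Lemma mulr_convex_weights (P Q A B : R) : P + Q != 0 ->
  (P + Q) * (P / (P + Q) * A + (1 - P / (P + Q)) * B) = P * A + Q * B.
Proof. by move=> PQ; field. Qed.

Lemma psi_hom_single i c : psi (@std_e R n i) = 1 ->
  0 <= c -> psi_hom (fun j => if j == i then c else 0) = c.
Proof.
move=> psi_ei c0.
have mass_c : mass (fun j => if j == i then c else 0) = c.
  by rewrite /mass (bigD1 i) //= eqxx big1 ?addr0 // => j /negbTE ->.
move: c0 mass_c; rewrite le_eqVlt => /predU1P [<- mass_c|c0 mass_c].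
  by rewrite psi_hom0 ?mass_c.
rewrite psi_homE mass_c //.
suff -> : direction (fun j => if j == i then c else 0) = @std_e R n i.
  by rewrite psi_ei mulr1.
apply/rowP => j; rewrite !mxE mass_c.
by case: eqP => _; rewrite ?divff ?mul0r // gt_eqF.
Qed.

Lemma set_coord_conv q i c : 0 < q i ->
  set_coord q i c = (fun j => c / q i * q j + (1 - c / q i) * set_coord q i 0 j).
Proof.
move=> qi0; apply: funext => j; rewrite /set_coord.
case: eqP => [->|_]; first by rewrite mulr0 addr0 divfK // gt_eqF.
by rewrite -mulrDl addrC subrK mul1r.
Qed.

Lemma nonneg_scale c p : 0 <= c -> nonneg p -> nonneg (fun j => c * p j).
Proof. by move=> c0 p0 j; rewrite mulr_ge0. Qed.

Lemma nonneg_set_coord q i c : nonneg q -> 0 <= c -> nonneg (set_coord q i c).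
Proof. by move=> q0 c0 j; rewrite /set_coord; case: ifP. Qed.

Lemma set_coord_id q i : set_coord q i (q i) = q.
Proof. by apply: funext => j; rewrite /set_coord; case: eqP => [->|]. Qed.

Lemma mass_set_coord0 q i : mass (set_coord q i 0) = mass q - q i.
Proof.
rewrite /mass (bigD1 i) //= [in RHS](bigD1 i) //= /set_coord eqxx add0r.
by rewrite addrC addrK; apply: eq_bigr => j /negbTE ->.
Qed.

Lemma set_coord0_mass_le0 q i : nonneg q -> mass (set_coord q i 0) <= 0 ->
  q = (fun j => if j == i then q i else 0).
Proof.
move=> q0 le0; apply: funext => j; case: eqP => [-> //|/eqP ji].
by have := mass_le0 (nonneg_set_coord i q0 (lexx 0)) le0 j; rewrite /set_coord (negbTE ji).
Qed.

Lemma mass_le_coord q k : nonneg q -> mass q <= q k -> forall j, j != k -> q j = 0.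
Proof.
move=> q0 le_k; apply: (@psumr_eq0P _ _ (fun j => j != k) _ (fun j _ => q0 j)).
apply/eqP; rewrite eq_le sumr_ge0 ?andbT //.
by move: le_k; rewrite /mass (bigD1 k) //= gerDl.
Qed.

Lemma direction_inj a b : nonneg a -> nonneg b -> 0 < psi_hom a ->
  psi_hom a = psi_hom b -> direction a = direction b -> a = b.
Proof.
move=> a0 b0 Fa_pos Fab dab.
have pos_a : 0 < mass a by apply: contraTT Fa_pos; rewrite -!leNgt => /psi_hom0 ->.
have pos_b : 0 < mass b.
  by apply: contraTT Fa_pos; rewrite Fab -!leNgt => /psi_hom0 ->.
have psi_d0 : psi (direction a) != 0.
  by apply: contraTneq Fa_pos => psi0; rewrite psi_homE // psi0 mulr0 ltxx.
have mab : mass a = mass b.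
  by apply: (mulIf psi_d0); rewrite -psi_homE // Fab psi_homE // dab.
apply: funext => j; have := congr1 (fun M : 'rV_n => M ord0 j) dab.
by rewrite /= !mxE mab => /(mulIf _); apply; rewrite invr_eq0 gt_eqF -?mab.
Qed.

Lemma norm_psiE (x : 'I_n -> X) : norm_psi psi x = psi_hom (fun i => `|x i|).
Proof.
rewrite /norm_psi /psi_hom; case: asboolP => [->|x0].
  by rewrite /mass big1 ?ltxx // => i _; rewrite normr0.
case: ltP => // le0; case: x0; apply: funext => i.
by apply/normr0_eq0; apply: (mass_le0 _ le0).
Qed.

Lemma norm_psi_sphere (u : 'I_n -> X) : (forall i, `|u i| = 1) ->
  forall s : 'rV[R]_n, Omega s -> psi s = norm_psi psi (fun i => s ord0 i *: u i).
Proof.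
move=> u1 s [s0 s1]; rewrite norm_psiE.
have /funext -> : (fun i => `|s ord0 i *: u i|) =1 (fun i => s ord0 i).
  by move=> i; rewrite normrZ u1 mulr1 ger0_norm.
rewrite psi_homE /mass s1 ?ltr01 // mul1r; congr psi.
by apply/rowP => j; rewrite mxE /mass s1 divr1.
Qed.

Section Convex.
Hypothesis psi_convex : forall s t l, Omega s -> Omega t -> 0 <= l <= 1 ->
  psi (l *: s + (1 - l) *: t) <= l * psi s + (1 - l) * psi t.

Lemma psi_homD p q : nonneg p -> nonneg q ->
  psi_hom (fun j => p j + q j) <= psi_hom p + psi_hom q.
Proof.
move=> p0 q0.
have [pos_p|le0_p] := ltP 0 (mass p); last first.
  have /funext -> : (fun j => p j + q j) =1 q.
    by move=> j; rewrite (mass_le0 p0 le0_p) add0r.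
  by rewrite (psi_hom0 le0_p) add0r.
have [pos_q|le0_q] := ltP 0 (mass q); last first.
  have /funext -> : (fun j => p j + q j) =1 p.
    by move=> j; rewrite (mass_le0 q0 le0_q) addr0.
  by rewrite (psi_hom0 le0_q) addr0.
have PQ : 0 < mass p + mass q by rewrite addr_gt0.
have l01 : 0 <= mass p / (mass p + mass q) <= 1.
  by apply/andP; split; rewrite ?divr_ge0 ?ler_pdivrMr // ?mul1r ?lerDl ltW.
rewrite psi_hom_addE // (psi_homE pos_p) (psi_homE pos_q) -mulr_convex_weights ?gt_eqF //.
apply: ler_wpM2l; first exact: ltW.
by apply: psi_convex => //; apply: direction_Omega.
Qed.

Lemma psi_hom_conv p q l : nonneg p -> nonneg q -> 0 <= l <= 1 ->
  psi_hom (fun j => l * p j + (1 - l) * q j) <= l * psi_hom p + (1 - l) * psi_hom q.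
Proof.
move=> p0 q0 /andP [l0 l1]; have l1' : 0 <= 1 - l by rewrite subr_ge0.
rewrite -(psi_homZ p l0) -(psi_homZ q l1').
exact: psi_homD (nonneg_scale l0 p0) (nonneg_scale l1' q0).
Qed.

Hypothesis psi_B2 : forall t i, Omega_int t ->
  psi t >= (1 - t ord0 i) *
    psi (\row_j (if j == i then 0 else t ord0 j / (1 - t ord0 i))).
Hypothesis psi_e : forall i, psi (@std_e R n i) = 1.

Lemma psi_hom_drop q i : nonneg q -> psi_hom (set_coord q i 0) <= psi_hom q.
Proof.
move=> q0; set z := set_coord q i 0.
have mass_z : mass z = mass q - q i := mass_set_coord0 q i.
have [pos_z|le0_z] := ltP 0 (mass z); last first.
  rewrite (psi_hom0 le0_z) [in psi_hom q](set_coord0_mass_le0 q0 le0_z).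
  by rewrite (psi_hom_single (psi_e i) (q0 i)).
have pos_q : 0 < mass q by rewrite (lt_le_trans pos_z) // mass_z gerBl.
(* (B2) needs [direction q] in the interior of the simplex; otherwise [q] is
   concentrated on one coordinate. *)
have [q_lt|] := boolP [forall k, q k < mass q]; last first.
  case/forallPn => k; rewrite -leNgt => le_k.
  have [ik|ik] := eqVneq i k; first by move: pos_z; rewrite mass_z ik subr_gt0 ltNge le_k.
  by rewrite /z -(mass_le_coord q0 le_k ik) set_coord_id.
have t_int : Omega_int (direction q).
  split=> [|k]; first exact: direction_Omega.
  by rewrite mxE ltr_pdivrMr // mul1r; move/forallP: q_lt.
have mq0 : mass q != 0 by rewrite gt_eqF.
have mz0 : mass q - q i != 0 by rewrite -mass_z gt_eqF.
rewrite (psi_homE pos_z) (psi_homE pos_q) [in mass z]mass_z.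
rewrite (_ : mass q - q i = mass q * (1 - direction q ord0 i)); last first.
  by rewrite mxE; field.
rewrite -mulrA; apply: ler_wpM2l; first exact: ltW.
have -> : direction z = \row_j (if j == i then 0
    else direction q ord0 j / (1 - direction q ord0 i)).
  apply/rowP => j; rewrite !mxE mass_z /z /set_coord.
  by case: eqP => _; rewrite ?mul0r //; field; rewrite mq0 mz0.
exact: psi_B2.
Qed.

Lemma psi_hom_set_le q i c : nonneg q -> 0 <= c <= q i ->
  psi_hom (set_coord q i c) <= psi_hom q.
Proof.
move=> q0 /andP [c0 cq]; have [qi0|qi_pos] := eqVneq (q i) 0.
  have -> : c = 0 by apply/eqP; rewrite eq_le c0 andbT -qi0.
  exact: psi_hom_drop.
have {}qi_pos : 0 < q i by rewrite lt_def qi_pos q0.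
have l01 : 0 <= c / q i <= 1.
  by apply/andP; split; rewrite ?divr_ge0 ?ler_pdivrMr ?mul1r // ltW.
rewrite set_coord_conv //.
apply: le_trans (psi_hom_conv q0 (nonneg_set_coord i q0 (lexx 0)) l01) _.
rewrite [leRHS](_ : _ = c / q i * psi_hom q + (1 - c / q i) * psi_hom q); last by ring.
rewrite lerD2l; apply: ler_wpM2l; last exact: psi_hom_drop.
by rewrite subr_ge0; case/andP: l01.
Qed.

Lemma psi_hom_le p q : nonneg p -> (forall i, p i <= q i) ->
  psi_hom p <= psi_hom q.
Proof.
move=> p0 pq; have q0 : nonneg q by move=> j; apply: le_trans (pq j).
pose mix k := fun j : 'I_n => if (j < k)%N then q j else p j.
suff mono : {homo (psi_hom \o mix) : k m / (k <= m)%N >-> k <= m}.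
  have /funext mix_n : mix n =1 q by move=> j; rewrite /mix ltn_ord.
  by move: (mono 0 n isT) => /=; rewrite mix_n.
apply: homo_leq => [//|? ? ?|k /=]; first exact: le_trans.
have [kn|nk] := ltnP k n; last first.
  have /funext -> : mix k.+1 =1 mix k.
    by move=> j; rewrite /mix !(leq_trans (ltn_ord j)) // ltnW.
  by [].
have -> : mix k = set_coord (mix k.+1) (Ordinal kn) (p (Ordinal kn)).
  apply: funext => j; rewrite /mix /set_coord.
  have [->|jk] := eqVneq j (Ordinal kn); first by rewrite /= ltnn.
  by move: jk; rewrite ltnS [(j <= k)%N]leq_eqVlt -val_eqE /= => /negbTE ->.
apply: psi_hom_set_le => [j|]; first by rewrite /mix; case: ifP.
by rewrite p0 /mix /= ltnSn pq.
Qed.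

Lemma psi_hom_ge_coord a i : nonneg a -> a i <= psi_hom a.
Proof.
move=> a0; rewrite -[leLHS](psi_hom_single (psi_e i) (a0 i)).
by apply: psi_hom_le => j; case: ifP => // /eqP ->.
Qed.

Lemma psi_hom_ge0 a : nonneg a -> 0 <= psi_hom a.
Proof.
move=> a0; have <- : psi_hom (fun=> 0) = 0 by rewrite psi_hom0 // /mass big1.
exact: psi_hom_le.
Qed.

Lemma psi_hom_eq0 a : nonneg a -> psi_hom a = 0 -> forall i, a i = 0.
Proof.
by move=> a0 F0 i; apply/eqP; rewrite eq_le a0 andbT -F0 psi_hom_ge_coord.
Qed.

Let nonneg_norm (x : 'I_n -> X) : nonneg (fun i => `|x i|) :=
  fun i => normr_ge0 (x i).

Lemma norm_psi_in_N : in_N (@norm_psi R X n psi).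
Proof.
split; first split.
- by move=> x; rewrite norm_psiE psi_hom_ge0.
- move=> x; rewrite norm_psiE => /(psi_hom_eq0 (nonneg_norm x)) x0.
  by apply: funext => i; apply/normr0_eq0.
- move=> a x; rewrite !norm_psiE -psi_homZ //.
  by congr psi_hom; apply: funext => i; rewrite normrZ.
- move=> x y; rewrite !norm_psiE; apply: le_trans (psi_homD _ _) => //.
  by apply: psi_hom_le => // i; apply: ler_normD.
- move=> x eps; rewrite !norm_psiE; congr psi_hom; apply: funext => i.
  by rewrite normrZ normrX normrN1 expr1n mul1r.
- move=> i v; rewrite norm_psiE -[RHS](psi_hom_single (psi_e i) (normr_ge0 v)).
  by congr psi_hom; apply: funext => j; case: ifP; rewrite ?normr0.
Qed.

Section StrictlyConvex.
Hypothesis psi_strictly_convex : forall s t l, Omega s -> Omega t -> s <> t ->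
  0 < l < 1 -> psi (l *: s + (1 - l) *: t) < l * psi s + (1 - l) * psi t.

Lemma psi_homD_lt p q : nonneg p -> nonneg q -> 0 < mass p -> 0 < mass q ->
  direction p <> direction q ->
  psi_hom (fun j => p j + q j) < psi_hom p + psi_hom q.
Proof.
move=> p0 q0 pos_p pos_q pq.
have PQ : 0 < mass p + mass q by rewrite addr_gt0.
have l01 : 0 < mass p / (mass p + mass q) < 1.
  by apply/andP; split; rewrite ?divr_gt0 ?ltr_pdivrMr // mul1r ltrDl.
rewrite psi_hom_addE // (psi_homE pos_p) (psi_homE pos_q) -mulr_convex_weights ?gt_eqF //.
by rewrite ltr_pM2l //; apply: psi_strictly_convex => //; apply: direction_Omega.
Qed.

Lemma psi_hom_conv_lt p q l : nonneg p -> nonneg q -> 0 < mass p -> 0 < mass q ->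
  direction p <> direction q -> 0 < l < 1 ->
  psi_hom (fun j => l * p j + (1 - l) * q j) < l * psi_hom p + (1 - l) * psi_hom q.
Proof.
move=> p0 q0 pos_p pos_q pq /andP [l0 l1]; have l1' : 0 < 1 - l by rewrite subr_gt0.
rewrite -(psi_homZ p (ltW l0)) -(psi_homZ q (ltW l1')).
apply: psi_homD_lt; rewrite ?massZ ?mulr_gt0 ?directionZ //.
- exact: nonneg_scale (ltW l0) p0.
- exact: nonneg_scale (ltW l1') q0.
Qed.

Lemma psi_hom_set_lt q i c : nonneg q -> 0 <= c < q i ->
  psi_hom (set_coord q i c) < psi_hom q.
Proof.
move=> q0 /andP [c0 cq]; have qi_pos : 0 < q i by apply: le_lt_trans cq.
set z := set_coord q i 0; have z0 : nonneg z by apply: nonneg_set_coord.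
(* The case [c = 0] goes through [c = q i / 2], using (B2). *)
suff lt_pos d : 0 < d < q i -> psi_hom (set_coord q i d) < psi_hom q.
  move: c0 cq; rewrite le_eqVlt => /predU1P [<- _|c_pos cq]; last by rewrite lt_pos ?c_pos.
  apply: le_lt_trans (lt_pos (q i / 2) _); last first.
    by rewrite divr_gt0 //= ltr_pdivrMr // ltr_pMr // ltr1n.
  rewrite -[X in psi_hom X <= _](_ : set_coord (set_coord q i (q i / 2)) i 0 = z).
    by apply: psi_hom_drop; apply: nonneg_set_coord => //; rewrite divr_ge0 ?ltW.
  by apply: funext => j; rewrite /z /set_coord; case: (j == i).
move=> /andP [d0 dq]; have [pos_z|le0_z] := ltP 0 (mass z); last first.
  rewrite (set_coord0_mass_le0 q0 le0_z) (psi_hom_single (psi_e i) (ltW qi_pos)).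
  rewrite -[X in psi_hom X](_ : (fun j => if j == i then d else 0) = _).
    by rewrite (psi_hom_single (psi_e i) (ltW d0)).
  by apply: funext => j; rewrite /set_coord; case: eqP.
have pos_q : 0 < mass q by rewrite (lt_le_trans pos_z) // mass_set_coord0 gerBl.
have dir_qz : direction q <> direction z.
  move/(congr1 (fun M : 'rV_n => M ord0 i)); rewrite !mxE /z /set_coord eqxx mul0r.
  by apply/eqP; rewrite gt_eqF // divr_gt0.
have l01 : 0 < d / q i < 1 by rewrite divr_gt0 //= ltr_pdivrMr // mul1r.
rewrite set_coord_conv //.
apply: lt_le_trans (psi_hom_conv_lt q0 z0 pos_q pos_z dir_qz l01) _.
rewrite [leRHS](_ : _ = d / q i * psi_hom q + (1 - d / q i) * psi_hom q); last by ring.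
rewrite lerD2l; apply: ler_wpM2l; last exact: psi_hom_drop.
by rewrite subr_ge0 ltW //; case/andP: l01.
Qed.

Lemma psi_hom_lt p q i : nonneg p -> (forall j, p j <= q j) -> p i < q i ->
  psi_hom p < psi_hom q.
Proof.
move=> p0 pq pqi; have q0 : nonneg q by move=> j; apply: le_trans (pq j).
apply: le_lt_trans (psi_hom_set_lt (i := i) (c := p i) q0 _); last by rewrite p0 pqi.
by apply: psi_hom_le => // j; rewrite /set_coord; case: eqP => [->|].
Qed.

Lemma norm_psi_strictly_convex : strictly_convex_normX X ->
  strictly_convex_norm (@norm_psi R X n psi).
Proof.
move=> Xsc x y.
rewrite /vscale /vadd !norm_psiE => Nx Ny xy.
set a := fun i => `|x i|; set b := fun i => `|y i|; set c := fun i => `|x i + y i|.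
have /funext -> : (fun i => `|2^-1 *: (x i + y i)|) =1 (fun i => 2^-1 * c i).
  by move=> i; rewrite normrZ ger0_norm.
rewrite psi_homZ // mulrC ltr_pdivrMr // mul1r.
suff : psi_hom c < psi_hom a + psi_hom b by rewrite Nx Ny.
have c_le_ab i : c i <= a i + b i by apply: ler_normD.
have mass_pos d : psi_hom d = 1 -> 0 < mass d.
  by case: ltP => // /psi_hom0 -> /esym/eqP; rewrite oner_eq0.
have [dab|dab] := pselect (direction a = direction b); last first.
  apply: le_lt_trans (psi_hom_le (nonneg_norm _) c_le_ab) _.
  exact: psi_homD_lt (nonneg_norm x) (nonneg_norm y) (mass_pos _ Nx) (mass_pos _ Ny) dab.
have ab : a = b.
  apply: direction_inj => //; [exact: nonneg_norm | exact: nonneg_norm | |].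
  - by rewrite Nx ltr01.
  - by rewrite Nx Ny.
have [i xyi] : exists i, x i <> y i.
  by apply/existsNP => xy_eq; apply: xy; apply: funext.
apply: lt_le_trans (psi_homD (nonneg_norm x) (nonneg_norm y)).
apply: (psi_hom_lt (i := i) (nonneg_norm _) c_le_ab).
by apply: normD_lt => //; rewrite -/(a i) -/(b i) ab.
Qed.

End StrictlyConvex.
End Convex.
End PsiNorm.

Unset Implicit Arguments.

Theorem theorem2p10 (R : realType) (X : normedModType R) (n : nat)
  (hn : (2 <= n)%N) (psi : 'rV[R]_n -> R) (hpsi : in_Psi psi) :
  [/\ in_N (@norm_psi R X n psi),
      (in_Psi_sc psi -> strictly_convex_normX X -> in_N_sc (@norm_psi R X n psi))
    & (forall (u : 'I_n -> X), (forall i, `|u i| = 1) ->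
        forall s : 'rV[R]_n, Omega s ->
          psi s = @norm_psi R X n psi (fun i => s ord0 i *: u i))].
Proof.
case: hpsi => psi_convex _ psi_e psi_B2.
have normN := norm_psi_in_N X psi_convex psi_B2 psi_e.
split=> // [[_ psi_sc] Xsc|]; first by split=> //; exact: norm_psi_strictly_convex.
exact: norm_psi_sphere.
Qed.
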